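(* Assume the CFL condition $0\le \lambda \sup_{w\ge 1} W'(w)\le 1$, let $(y_{0,i})_{i\in\mathbb Z}$ be a bounded sequence with $y_{0,i}\ge1$, let $(w^n_i)$ be the solution of the scheme, and set $(\Delta\widehat w)^n=\sup_i|w^n_{i+1}-w^n_i|$ and $t^n=n\Delta t$. Then there is a constant $C$ independent of $n$, $\Delta z$, $\Delta t$ and $\alpha$ (e.g. $C=2\|W'\|_\infty\Phi(0)$) such that for all $n\ge0$ $$(\Delta\widehat w)^n\le (\Delta\widehat w)^0\exp\Bigl(\frac{C}{\alpha}t^n\Bigr),\qquad \sup_i|w^{n+1}_i-w^n_i|\le \lambda\,\|W'\|_\infty\,(\Delta\widehat w)^0\exp\Bigl(\frac{C}{\alpha}t^n\Bigr),$$ where $\|W'\|_\infty=\sup_{w\ge1}|W'(w)|$.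
   Context: Kernel: $\Phi:[0,\infty)\to[0,\infty)$ is non-increasing with $\int_0^\infty\Phi(z)\,dz=1$ and $\int_0^\infty z\Phi(z)\,dz<\infty$; for $\alpha>0$, $\Phi_\alpha(z)=\alpha^{-1}\Phi(z/\alpha)$. Flux: $V\in C^1([0,\infty))$ is non-increasing and $W:[1,\infty)\to\mathbb R$, $W(w)=V(1/w)$. Discretization: $\Delta z>0$, $\Delta t>0$, $\lambda=\Delta t/\Delta z$, $z_j=(j-\tfrac12)\Delta z$ for $j\in\tfrac12\mathbb Z$, and for integers $j\ge i$, $\Phi_{ij\alpha}=\int_{z_{j-1/2}}^{z_{j+1/2}}\Phi_\alpha(\zeta-z_{i-1/2})\,d\zeta$. The scheme: $w^0_i=\sum_{j\ge i}\Phi_{ij\alpha}y_{0,j}$ and $w^{n+1}_i=w^n_i+\lambda(\overline W^{\,n}_{i+1/2}-\overline W^{\,n}_{i-1/2})$ for $n\ge0$, where $\overline W^{\,n}_{i-1/2}=\sum_{j\ge i}\Phi_{ij\alpha}W(w^n_j)$. *)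

From Stdlib Require Import Reals.
From Coquelicot Require Import Coquelicot.
Open Scope R_scope.

Definition Phi_alpha (Phi : R -> R) (alpha z : R) : R := / alpha * Phi (z / alpha).

(* Grid points z_j = (j - 1/2) dz, for j in (1/2)Z (j given as a real). *)
Definition zpt (dz j : R) : R := (j - / 2) * dz.

Definition Phi_ij (Phi : R -> R) (dz alpha : R) (i j : Z) : R :=
  RInt (fun zeta => Phi_alpha Phi alpha (zeta - zpt dz (IZR i - / 2)))
       (zpt dz (IZR j - / 2)) (zpt dz (IZR j + / 2)).

Definition nlsum (Phi : R -> R) (dz alpha : R) (f : Z -> R) (i : Z) : R :=
  Series (fun k : nat => Phi_ij Phi dz alpha i (i + Z.of_nat k)%Z * f (i + Z.of_nat k)%Z).

Definition Wf (V : R -> R) (w : R) : R := V (/ w).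

(* The scheme: w^0_i = sum_{j>=i} Phi_{ij} y_{0,j};
   w^{n+1}_i = w^n_i + lambda (Wbar^n_{i+1/2} - Wbar^n_{i-1/2}),
   with Wbar^n_{i-1/2} = sum_{j>=i} Phi_{ij} W(w^n_j)  (= nlsum ... i). *)
Fixpoint scheme (Phi V : R -> R) (dz dt alpha : R) (y0 : Z -> R) (n : nat) : Z -> R :=
  match n with
  | O => nlsum Phi dz alpha y0
  | S m =>
      let u := scheme Phi V dz dt alpha y0 m in
      let Wbar := nlsum Phi dz alpha (fun j => Wf V (u j)) in
      fun i => u i + (dt / dz) * (Wbar (i + 1)%Z - Wbar i)
  end.

Definition supWp (V : R -> R) : Rbar :=
  Lub_Rbar (fun x => exists w, 1 <= w /\ x = Derive (Wf V) w).

Definition normWp (V : R -> R) : R :=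
  real (Lub_Rbar (fun x => exists w, 1 <= w /\ x = Rabs (Derive (Wf V) w))).

Definition supZ (u : Z -> R) : Rbar :=
  Lub_Rbar (fun x => exists i : Z, x = Rabs (u i)).

Definition C1_nonneg (V dV : R -> R) : Prop :=
  (forall x, 0 < x -> is_derive V x (dV x)) /\
  filterlim (fun h => (V h - V 0) / h) (at_right 0) (locally (dV 0)) /\
  (forall x, 0 <= x ->
     filterlim dV (within (fun y => 0 <= y) (locally x)) (locally (dV x))).

(* Writing  g_k = int_{kh}^{(k+1)h} Phi  (h = dz/alpha), the nonlocal flux is
   Wbar_{i-1/2} = sum_{k>=0} g_k W(w_{i+k}), and summation by parts rewrites one step as
     w^{n+1}_i = (w_i - lam g_0 W(w_i)) + lam sum_k (g_k - g_{k+1}) W(w_{i+k+1}).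
   Since W is nondecreasing with slope at most s = ||W'||_oo and lam g_0 s <= lam s <= 1, the
   local map  x |-> x - lam g_0 W(x)  is nondecreasing and 1-Lipschitz on [1, oo), and the
   differenced weights are nonnegative with total mass g_0.  Hence (i) w^n >= 1 is preserved,
   (ii) spatial increments grow by at most the factor  1 + lam g_0 s, and (iii) the time
   increment is at most  lam s  times the spatial one.  With  g_0 <= h Phi(0)  this gives
   (1 + lam g_0 s)^n <= exp(s Phi(0) t^n / alpha), i.e. the lemma with  C = ||W'||_oo Phi(0). *)
From Stdlib Require Import Reals Lra Lia ZArith.
From Coquelicot Require Import Coquelicot.
Open Scope R_scope.

Section WeightedSeries.

Variable g : nat -> R.
Hypothesis g_nonneg : forall k, 0 <= g k.
Hypothesis g_summable : ex_series g.

Lemma weighted_summable (x : nat -> R) (B : R) :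
  (forall k, Rabs (x k) <= B) -> ex_series (fun k => g k * x k).
Proof.
  intros Hx.
  apply (@ex_series_le R_AbsRing R_CompleteNormedModule _ (fun k => B * g k)).
  - intros k. change (norm (g k * x k)) with (Rabs (g k * x k)).
    rewrite Rabs_mult, (Rabs_pos_eq (g k)), Rmult_comm by auto.
    apply Rmult_le_compat_r; auto.
  - now apply (ex_series_scal_l B g).
Qed.

Lemma weighted_abs_bound (x : nat -> R) (B : R) :
  (forall k, Rabs (x k) <= B) -> Rabs (Series (fun k => g k * x k)) <= B * Series g.
Proof.
  intros Hx.
  assert (Habs : forall k, Rabs (g k * x k) = g k * Rabs (x k))
    by (intros k; rewrite Rabs_mult, (Rabs_pos_eq (g k)); auto).
  eapply Rle_trans.
  - apply Series_Rabs. apply (ex_series_ext (fun k => g k * Rabs (x k))).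
    + intros k. now rewrite Habs.
    + apply (weighted_summable _ B). intros k. now rewrite Rabs_Rabsolu.
  - rewrite <- Series_scal_l. apply Series_le.
    + intros k. rewrite Habs. split.
      * apply Rmult_le_pos; [auto | apply Rabs_pos].
      * rewrite Rmult_comm. apply Rmult_le_compat_r; auto.
    + now apply (ex_series_scal_l B g).
Qed.

Lemma weighted_lower_bound (x : nat -> R) (c B : R) :
  (forall k, Rabs (x k) <= B) -> (forall k, c <= x k) ->
  c * Series g <= Series (fun k => g k * x k).
Proof.
  intros Hx Hc.
  assert (Hcg : ex_series (fun k => c * g k)) by now apply (ex_series_scal_l c g).
  assert (Hgap : 0 <= Series (fun k => g k * x k - c * g k)).
  { rewrite <- (Rmult_0_l (Series g)), <- Series_scal_l. apply Series_le.
    - intros k. specialize (Hc k). specialize (g_nonneg k). nra.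
    - apply (ex_series_ext (fun k => plus (g k * x k) (opp (c * g k)))); [reflexivity|].
      apply (@ex_series_minus R_AbsRing R_NormedModule); auto.
      now apply (weighted_summable _ B). }
  rewrite Series_minus, Series_scal_l in Hgap; auto.
  - lra.
  - now apply (weighted_summable _ B).
Qed.

End WeightedSeries.

Lemma ex_series_differences (a : nat -> R) :
  ex_series a -> ex_series (fun k => a k - a (S k)).
Proof.
  intros Ha. apply (ex_series_ext (fun k => plus (a k) (opp (a (S k))))); [reflexivity|].
  apply (@ex_series_minus R_AbsRing R_NormedModule); auto.
  now apply ex_series_incr_1 in Ha.
Qed.

Lemma series_telescope (a : nat -> R) :
  ex_series a -> Series (fun k => a k - a (S k)) = a O.
Proof.
  intros Ha. assert (Ha1 := Ha). apply ex_series_incr_1 in Ha1.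
  rewrite Series_minus, (Series_incr_1 a); auto. ring.
Qed.

Definition fwd_sum (g : nat -> R) (f : Z -> R) (i : Z) : R :=
  Series (fun k => g k * f (i + Z.of_nat k)%Z).

Section ForwardSums.

Variable g : nat -> R.
Hypothesis g_nonneg : forall k, 0 <= g k.
Hypothesis g_summable : ex_series g.
Variables (f : Z -> R) (B : R).
Hypothesis f_bounded : forall j, Rabs (f j) <= B.

Let shifted_summable (i : Z) : ex_series (fun k => g k * f (i + Z.of_nat k)%Z).
Proof. now apply (weighted_summable g g_nonneg g_summable _ B). Qed.

Lemma fwd_sum_succ (i : Z) :
  fwd_sum g f (i + 1) = Series (fun k => g k * f (i + Z.of_nat (S k))%Z).
Proof. apply Series_ext. intros k. do 2 f_equal. lia. Qed.

Lemma fwd_sum_abs_bound (i : Z) : Rabs (fwd_sum g f i) <= B * Series g.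
Proof. now apply weighted_abs_bound. Qed.

Lemma fwd_sum_lower_bound (c : R) (i : Z) :
  (forall j, c <= f j) -> c * Series g <= fwd_sum g f i.
Proof. intros Hc. now apply (weighted_lower_bound g g_nonneg g_summable _ c B). Qed.

Lemma fwd_sum_increment (i : Z) :
  fwd_sum g f (i + 1) - fwd_sum g f i = fwd_sum g (fun j => f (j + 1)%Z - f j) i.
Proof.
  unfold fwd_sum. rewrite <- Series_minus by apply shifted_summable.
  apply Series_ext. intros k. replace (i + 1 + Z.of_nat k)%Z with (i + Z.of_nat k + 1)%Z by lia.
  ring.
Qed.

Lemma fwd_sum_by_parts (i : Z) :
  fwd_sum g f (i + 1) - fwd_sum g f i
  = - g O * f i + fwd_sum (fun k => g k - g (S k)) f (i + 1).
Proof.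
  assert (Hsucc := shifted_summable i). apply ex_series_incr_1 in Hsucc.
  rewrite fwd_sum_succ. unfold fwd_sum.
  rewrite (Series_incr_1 _ (shifted_summable i)), Z.add_0_r.
  rewrite (Series_ext (fun k => (g k - g (S k)) * f (i + 1 + Z.of_nat k)%Z)
             (fun k => g k * f (i + Z.of_nat (S k))%Z - g (S k) * f (i + Z.of_nat (S k))%Z)).
  - rewrite Series_minus; [ring | | exact Hsucc].
    apply (ex_series_ext (fun k => g k * f (i + 1 + Z.of_nat k)%Z)).
    + intros k. do 2 f_equal. lia.
    + apply shifted_summable.
  - intros k. replace (i + 1 + Z.of_nat k)%Z with (i + Z.of_nat (S k))%Z by lia. ring.
Qed.

End ForwardSums.

Lemma weighted_initial_data (g : nat -> R) (y0 : Z -> R) (M : R) :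
  (forall k, 0 <= g k) -> is_series g 1 ->
  (forall i, Rabs (y0 i) <= M) -> (forall i, 1 <= y0 i) ->
  (forall i, 1 <= fwd_sum g y0 i) /\
  (forall i, Rabs (fwd_sum g y0 (i + 1) - fwd_sum g y0 i) <= M + M).
Proof.
  intros Hg Hmass HM Hy.
  assert (Hsum : Series g = 1) by now apply is_series_unique.
  assert (Hsummable : ex_series g) by now exists 1.
  split; intros i.
  - rewrite <- (Rmult_1_l 1) at 1. rewrite <- Hsum at 2.
    now apply (fwd_sum_lower_bound g Hg Hsummable y0 M HM).
  - eapply Rle_trans; [apply Rabs_triang |]. rewrite Rabs_Ropp.
    pose proof (fwd_sum_abs_bound g Hg Hsummable y0 M HM (i + 1)).
    pose proof (fwd_sum_abs_bound g Hg Hsummable y0 M HM i).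
    rewrite Hsum in *. lra.
Qed.

Lemma flux_lipschitz (W : R -> R) (s : R) :
  (forall x y, 1 <= x -> x <= y -> 0 <= W y - W x <= s * (y - x)) ->
  forall x y, 1 <= x -> 1 <= y -> Rabs (W y - W x) <= s * Rabs (y - x).
Proof.
  intros HW x y Hx Hy. destruct (Rle_dec x y) as [Hxy | Hxy].
  - destruct (HW x y Hx Hxy). rewrite !Rabs_pos_eq by lra. lra.
  - destruct (HW y x Hy) as [H1 H2]; [lra |].
    rewrite !Rabs_left1 by lra. lra.
Qed.

(* The local part  x |-> x - mu W(x)  of the scheme is nondecreasing and 1-Lipschitz on
   [1, oo) under the CFL-type condition  mu s <= 1: this is where monotonicity enters. *)
Lemma damped_flux_monotone (W : R -> R) (s mu : R) :
  (forall x y, 1 <= x -> x <= y -> 0 <= W y - W x <= s * (y - x)) ->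
  0 <= mu -> mu * s <= 1 ->
  forall a b, 1 <= a -> a <= b -> 0 <= (b - mu * W b) - (a - mu * W a) <= b - a.
Proof. intros HW Hmu Hcfl a b Ha Hab. destruct (HW a b Ha Hab). nra. Qed.

Lemma damped_flux_contraction (W : R -> R) (s mu : R) :
  (forall x y, 1 <= x -> x <= y -> 0 <= W y - W x <= s * (y - x)) ->
  0 <= mu -> mu * s <= 1 ->
  forall a b, 1 <= a -> 1 <= b -> Rabs ((b - mu * W b) - (a - mu * W a)) <= Rabs (b - a).
Proof.
  intros HW Hmu Hcfl a b Ha Hb. destruct (Rle_dec a b) as [Hab | Hab].
  - destruct (damped_flux_monotone W s mu HW Hmu Hcfl a b Ha Hab).
    rewrite !Rabs_pos_eq by lra. lra.
  - destruct (damped_flux_monotone W s mu HW Hmu Hcfl b a Hb) as [H1 H2]; [lra |].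
    rewrite !Rabs_left1 by lra. lra.
Qed.

Definition step (g : nat -> R) (W : R -> R) (lam : R) (u : Z -> R) : Z -> R :=
  fun i => u i + lam * (fwd_sum g (fun j => W (u j)) (i + 1)
                        - fwd_sum g (fun j => W (u j)) i).

Section SchemeStep.

Variable g : nat -> R.
Hypothesis g_nonneg : forall k, 0 <= g k.
Hypothesis g_noninc : forall k, g (S k) <= g k.
Hypothesis g_mass : is_series g 1.

Variables (W : R -> R) (s Wb lam : R).
Hypothesis W_slope : forall x y, 1 <= x -> x <= y -> 0 <= W y - W x <= s * (y - x).
Hypothesis W_bounded : forall x, 1 <= x -> Rabs (W x) <= Wb.
Hypothesis lam_nonneg : 0 <= lam.
Hypothesis s_nonneg : 0 <= s.
Hypothesis cfl : lam * s <= 1.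

Let g_summable : ex_series g.
Proof. now exists 1. Qed.

Let g_sum : Series g = 1.
Proof. now apply is_series_unique. Qed.

Let dg (k : nat) : R := g k - g (S k).

Let dg_nonneg (k : nat) : 0 <= dg k.
Proof. unfold dg. specialize (g_noninc k). lra. Qed.

Let dg_summable : ex_series dg.
Proof. now apply ex_series_differences. Qed.

Let dg_sum : Series dg = g O.
Proof. now apply series_telescope. Qed.

Let local_cfl : lam * g O * s <= 1.
Proof.
  assert (g O <= 1).
  { rewrite <- dg_sum, <- g_sum.
    apply Series_le; [| exact g_summable].
    intros k. split; [apply dg_nonneg |]. unfold dg. specialize (g_nonneg (S k)). lra. }
  specialize (g_nonneg O). nra.
Qed.

Let local_damping_nonneg : 0 <= lam * g O.
Proof. apply Rmult_le_pos; auto. Qed.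

Section OneStep.

Variable u : Z -> R.
Hypothesis u_ge_1 : forall i, 1 <= u i.

Let flux_bounded (j : Z) : Rabs (W (u j)) <= Wb.
Proof. apply W_bounded, u_ge_1. Qed.

(* Summation by parts turns the step into the damped local map plus a nonnegative
   combination of fluxes downstream. *)
Lemma step_by_parts (i : Z) :
  step g W lam u i
  = (u i - lam * g O * W (u i)) + lam * fwd_sum dg (fun j => W (u j)) (i + 1).
Proof.
  unfold step.
  rewrite (fwd_sum_by_parts g g_nonneg g_summable _ Wb flux_bounded). fold dg. ring.
Qed.

Lemma step_ge_1 (i : Z) : 1 <= step g W lam u i.
Proof.
  rewrite step_by_parts.
  assert (Hloc := damped_flux_monotone W s (lam * g O) W_slope local_damping_nonneg
                    local_cfl 1 (u i) (Rle_refl 1) (u_ge_1 i)).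
  assert (Hdown : W 1 * g O <= fwd_sum dg (fun j => W (u j)) (i + 1)).
  { rewrite <- dg_sum. apply (fwd_sum_lower_bound dg dg_nonneg dg_summable _ Wb flux_bounded).
    intros j. destruct (W_slope 1 (u j)); [lra | apply u_ge_1 | lra]. }
  assert (lam * (W 1 * g O) <= lam * fwd_sum dg (fun j => W (u j)) (i + 1))
    by (apply Rmult_le_compat_l; auto).
  lra.
Qed.

Variable D : R.
Hypothesis u_increments : forall j, Rabs (u (j + 1)%Z - u j) <= D.

Let flux_increments (j : Z) : Rabs (W (u (j + 1)%Z) - W (u j)) <= s * D.
Proof.
  eapply Rle_trans; [apply (flux_lipschitz W s W_slope); apply u_ge_1 |].
  apply Rmult_le_compat_l; auto.
Qed.

(* Growth of the spatial increments over one step: the local part contracts, the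
   downstream part contributes at most  lam g_0 s D. *)
Lemma step_increment_bound (i : Z) :
  Rabs (step g W lam u (i + 1)%Z - step g W lam u i) <= (1 + lam * g O * s) * D.
Proof.
  rewrite !step_by_parts.
  assert (Hloc := damped_flux_contraction W s (lam * g O) W_slope local_damping_nonneg
                    local_cfl (u i) (u (i + 1)%Z) (u_ge_1 _) (u_ge_1 _)).
  assert (Hdown : Rabs (fwd_sum dg (fun j => W (u j)) (i + 1 + 1)
                        - fwd_sum dg (fun j => W (u j)) (i + 1)) <= s * D * g O).
  { rewrite (fwd_sum_increment dg dg_nonneg dg_summable _ Wb flux_bounded), <- dg_sum.
    apply (fwd_sum_abs_bound dg dg_nonneg dg_summable _ (s * D) flux_increments). }
  assert (Hlam : lam * Rabs (fwd_sum dg (fun j => W (u j)) (i + 1 + 1)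
                             - fwd_sum dg (fun j => W (u j)) (i + 1)) <= lam * (s * D * g O))
    by (apply Rmult_le_compat_l; auto).
  replace ((1 + lam * g O * s) * D) with (D + lam * (s * D * g O)) by ring.
  match goal with |- Rabs (?a + ?b * ?c - (?d + ?b * ?e)) <= _ =>
    replace (a + b * c - (d + b * e)) with ((a - d) + b * (c - e)) by ring end.
  eapply Rle_trans; [apply Rabs_triang |].
  rewrite Rabs_mult, (Rabs_pos_eq lam) by auto.
  specialize (u_increments i). lra.
Qed.

Lemma step_time_increment_bound (i : Z) : Rabs (step g W lam u i - u i) <= lam * s * D.
Proof.
  unfold step. rewrite Rplus_minus_l, Rabs_mult, (Rabs_pos_eq lam), Rmult_assoc by auto.
  apply Rmult_le_compat_l; auto.
  rewrite (fwd_sum_increment g g_nonneg g_summable _ Wb flux_bounded).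
  rewrite <- (Rmult_1_r (s * D)), <- g_sum.
  apply (fwd_sum_abs_bound g g_nonneg g_summable _ (s * D) flux_increments).
Qed.

End OneStep.

Lemma step_iteration (w : nat -> Z -> R) (d0 : R) :
  (forall m i, w (S m) i = step g W lam (w m) i) ->
  (forall i, 1 <= w O i) ->
  (forall i, Rabs (w O (i + 1)%Z - w O i) <= d0) ->
  forall m,
    (forall i, 1 <= w m i) /\
    (forall i, Rabs (w m (i + 1)%Z - w m i) <= d0 * (1 + lam * g O * s) ^ m) /\
    (forall i, Rabs (w (S m) i - w m i) <= lam * s * (d0 * (1 + lam * g O * s) ^ m)).
Proof.
  intros Hw H0 HD0.
  assert (Hspace : forall m, (forall i, 1 <= w m i) /\
            (forall i, Rabs (w m (i + 1)%Z - w m i) <= d0 * (1 + lam * g O * s) ^ m)).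
  { induction m as [| m [Hu HD]].
    - split; [exact H0 |]. intros i. rewrite pow_O, Rmult_1_r. apply HD0.
    - split; intros i; rewrite ?Hw.
      + now apply step_ge_1.
      + eapply Rle_trans; [now apply (step_increment_bound _ Hu _ HD) |].
        right. simpl. ring. }
  intros m. destruct (Hspace m) as [Hu HD].
  repeat split; [exact Hu | exact HD |].
  intros i. rewrite Hw. now apply step_time_increment_bound.
Qed.

End SchemeStep.

Section KernelWeights.

Variable Phi : R -> R.
Hypothesis Phi_nonneg : forall z, 0 <= z -> 0 <= Phi z.
Hypothesis Phi_noninc : forall z1 z2, 0 <= z1 -> z1 <= z2 -> Phi z2 <= Phi z1.
Hypothesis Phi_int1 : is_RInt_gen Phi (at_point 0) (Rbar_locally p_infty) 1.

Lemma Phi_integrable (a b : R) : 0 <= a -> a <= b -> ex_RInt Phi a b.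
Proof.
  intros Ha Hab.
  unfold is_RInt_gen, filterlimi, filter_le, filtermapi in Phi_int1.
  destruct (Phi_int1 (fun _ => True)) as [Q R' HQ [M HM] Hp]; [apply filter_true |].
  set (b' := Rmax b M + 1).
  destruct (Hp 0 b' HQ) as [y [Hy _]].
  { apply HM. unfold b'. pose proof (Rmax_r b M). lra. }
  apply (@ex_RInt_Chasles_2 R_CompleteNormedModule _ 0); [lra |].
  apply (@ex_RInt_Chasles_1 R_CompleteNormedModule _ _ _ b');
    [unfold b'; pose proof (Rmax_l b M); lra |].
  now exists y.
Qed.

Lemma Phi_partial_integrals (eps : posreal) :
  exists M, forall b, M < b -> Rabs (RInt Phi 0 b - 1) < eps.
Proof.
  unfold is_RInt_gen, filterlimi, filter_le, filtermapi in Phi_int1.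
  destruct (Phi_int1 (ball 1 eps)) as [Q R' HQ [M HM] Hp]; [apply locally_ball |].
  exists M. intros b Hb.
  destruct (Hp 0 b HQ (HM b Hb)) as [y [Hy Hball]].
  simpl in Hy. now rewrite (is_RInt_unique _ _ _ _ Hy).
Qed.

Definition kernel_weight (h : R) (k : nat) : R := RInt Phi (INR k * h) (INR k * h + h).

Variable h : R.
Hypothesis h_pos : 0 < h.

Let cell_nonneg (k : nat) : 0 <= INR k * h.
Proof. apply Rmult_le_pos; [apply pos_INR | lra]. Qed.

(* By the change of variables  zeta = z_{i-1/2} + alpha z,  Phi_{ij alpha} only depends
   on j - i, through the cells of width  h = dz / alpha. *)
Lemma Phi_ij_kernel_weight (dz alpha : R) (i : Z) (k : nat) :
  0 < alpha -> h = dz / alpha ->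
  Phi_ij Phi dz alpha i (i + Z.of_nat k)%Z = kernel_weight h k.
Proof.
  intros Ha Hh. unfold Phi_ij, kernel_weight.
  set (c := zpt dz (IZR i - / 2)).
  assert (Ea : / alpha * zpt dz (IZR (i + Z.of_nat k) - / 2) + - c / alpha = INR k * h).
  { unfold c, zpt. rewrite Hh, plus_IZR, <- INR_IZR_INZ. field. lra. }
  assert (Eb : / alpha * zpt dz (IZR (i + Z.of_nat k) + / 2) + - c / alpha = INR k * h + h).
  { unfold c, zpt. rewrite Hh, plus_IZR, <- INR_IZR_INZ. field. lra. }
  transitivity (RInt (fun y => scal (/ alpha) (Phi (/ alpha * y + - c / alpha)))
                  (zpt dz (IZR (i + Z.of_nat k) - / 2)) (zpt dz (IZR (i + Z.of_nat k) + / 2))).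
  - apply RInt_ext. intros x _. unfold Phi_alpha, scal; simpl; unfold mult; simpl.
    do 2 f_equal. field. lra.
  - rewrite (@RInt_comp_lin R_CompleteNormedModule Phi), Ea, Eb; [reflexivity |].
    rewrite Ea, Eb. apply Phi_integrable; [apply cell_nonneg | lra].
Qed.

Lemma kernel_weight_nonneg (k : nat) : 0 <= kernel_weight h k.
Proof.
  unfold kernel_weight. pose proof (cell_nonneg k).
  apply RInt_ge_0; [lra | apply Phi_integrable; lra |].
  intros x Hx. apply Phi_nonneg. lra.
Qed.

(* The weights inherit the monotonicity of Phi, by translating the cell by h. *)
Lemma kernel_weight_noninc (k : nat) : kernel_weight h (S k) <= kernel_weight h k.
Proof.
  unfold kernel_weight. pose proof (cell_nonneg k).
  assert (E1 : 1 * (INR k * h) + h = INR (S k) * h) by (rewrite S_INR; ring).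
  assert (E2 : 1 * (INR k * h + h) + h = INR (S k) * h + h) by (rewrite S_INR; ring).
  rewrite <- E2, <- E1, <- (@RInt_comp_lin R_CompleteNormedModule Phi);
    [| rewrite E1, E2; apply Phi_integrable; rewrite <- ?E1; lra].
  apply RInt_le; [lra | | apply Phi_integrable; lra |].
  - apply (@ex_RInt_comp_lin R_NormedModule). apply Phi_integrable; lra.
  - intros x Hx. unfold scal; simpl; unfold mult; simpl.
    rewrite !Rmult_1_l. apply Phi_noninc; lra.
Qed.

Lemma kernel_weight_mass : is_series (kernel_weight h) 1.
Proof.
  assert (Hpartial : forall N, sum_n (kernel_weight h) N = RInt Phi 0 (INR (S N) * h)).
  { induction N as [| N IHN].
    - rewrite sum_O. unfold kernel_weight. simpl INR. f_equal; ring.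
    - rewrite sum_Sn, IHN. unfold kernel_weight.
      pose proof (cell_nonneg (S N)).
      replace (INR (S (S N)) * h) with (INR (S N) * h + h) by (rewrite (S_INR (S N)); ring).
      apply (@RInt_Chasles R_CompleteNormedModule); apply Phi_integrable; lra. }
  change (is_lim_seq (sum_n (kernel_weight h)) 1).
  apply is_lim_seq_spec. intros eps.
  destruct (Phi_partial_integrals eps) as [M HM].
  pose proof is_lim_seq_INR as HI. apply is_lim_seq_spec in HI.
  destruct (HI (M / h)) as [N HN]. exists N. intros n Hn.
  rewrite Hpartial. apply HM. specialize (HN n Hn).
  apply (Rmult_lt_compat_r h) in HN; auto.
  unfold Rdiv in HN. rewrite Rmult_assoc, Rinv_l, Rmult_1_r in HN by lra.
  rewrite S_INR. lra.
Qed.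

Lemma kernel_weight_first : kernel_weight h O <= h * Phi 0.
Proof.
  unfold kernel_weight. simpl INR. rewrite Rmult_0_l, Rplus_0_l.
  eapply Rle_trans.
  - apply (RInt_le Phi (fun _ => Phi 0)); [lra | apply Phi_integrable; lra |
                                            apply ex_RInt_const |].
    intros x Hx. apply Phi_noninc; lra.
  - rewrite RInt_const. unfold scal; simpl; unfold mult; simpl. lra.
Qed.

End KernelWeights.

Lemma derive_nonneg_of_nondecreasing (f : R -> R) (x : R) :
  0 < x -> ex_derive f x -> (forall a b, 0 < a -> a <= b -> f a <= f b) ->
  0 <= Derive f x.
Proof.
  intros Hx Hd Hm.
  pose proof (Derive_correct f x Hd) as Hlim. apply is_derive_Reals in Hlim.
  destruct (Rle_dec 0 (Derive f x)) as [Hp | Hn]; auto. exfalso.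
  set (l := Derive f x) in *.
  destruct (Hlim (- l / 2)) as [del Hdel]; [lra |].
  set (t := Rmin (del / 2) (x / 2)).
  assert (Ht : 0 < t) by (unfold t; apply Rmin_pos; pose proof (cond_pos del); lra).
  assert (Htdel : Rabs t < del).
  { rewrite Rabs_pos_eq by lra. unfold t.
    pose proof (Rmin_l (del / 2) (x / 2)). pose proof (cond_pos del). lra. }
  specialize (Hdel t (Rgt_not_eq _ _ Ht) Htdel).
  assert (0 <= (f (x + t) - f x) / t).
  { apply Rdiv_le_0_compat; auto. assert (f x <= f (x + t)) by (apply Hm; lra). lra. }
  apply Rabs_lt_between in Hdel. lra.
Qed.

Section Flux.

Variable V : R -> R.
Hypothesis V_noninc : forall x1 x2, 0 <= x1 -> x1 <= x2 -> V x2 <= V x1.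

Lemma W_nondecreasing (x y : R) : 0 < x -> x <= y -> Wf V x <= Wf V y.
Proof.
  intros Hx Hxy. unfold Wf. apply V_noninc.
  - apply Rlt_le, Rinv_0_lt_compat; lra.
  - apply Rinv_le_contravar; lra.
Qed.

Lemma W_bounded (x : R) : 1 <= x -> Rabs (Wf V x) <= Rabs (V 0) + Rabs (V 1).
Proof.
  intros Hx. unfold Wf.
  assert (H1 : 0 < / x) by (apply Rinv_0_lt_compat; lra).
  assert (H2 : / x <= 1) by (rewrite <- Rinv_1; apply Rinv_le_contravar; lra).
  pose proof (V_noninc 0 (/ x) (Rle_refl 0) (Rlt_le _ _ H1)).
  pose proof (V_noninc (/ x) 1 (Rlt_le _ _ H1) H2).
  pose proof (Rle_abs (V 0)). pose proof (Rle_abs (- V 1)) as H5. rewrite Rabs_Ropp in H5.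
  pose proof (Rabs_pos (V 0)). pose proof (Rabs_pos (V 1)).
  apply Rabs_le. lra.
Qed.

Variable dV : R -> R.
Hypothesis V_deriv : forall x, 0 < x -> is_derive V x (dV x).

Lemma W_derivable (x : R) : 0 < x -> ex_derive (Wf V) x.
Proof.
  intros Hx. unfold Wf.
  exists (scal (- 1 / x ^ 2) (dV (/ x))).
  apply (is_derive_comp V (fun y => / y)).
  - apply V_deriv. apply Rinv_0_lt_compat; lra.
  - apply (is_derive_inv (fun y => y) x 1); [apply (@is_derive_id R_AbsRing) | lra].
Qed.

(* Mean value theorem: a slope bound s on W' gives  0 <= W y - W x <= s (y - x). *)
Lemma W_slope_bound (s : R) :
  (forall c, 1 <= c -> Derive (Wf V) c <= s) ->
  forall x y, 1 <= x -> x <= y -> 0 <= Wf V y - Wf V x <= s * (y - x).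
Proof.
  intros Hs x y Hx Hxy. split.
  - pose proof (W_nondecreasing x y). lra.
  - destruct (MVT_gen (Wf V) x y (Derive (Wf V))) as [c [Hc Heq]].
    + intros z Hz. rewrite Rmin_left, Rmax_right in Hz by lra.
      apply Derive_correct, W_derivable. lra.
    + intros z Hz. rewrite Rmin_left, Rmax_right in Hz by lra.
      apply continuity_pt_filterlim, (@ex_derive_continuous R_AbsRing R_NormedModule),
        W_derivable. lra.
    + rewrite Rmin_left, Rmax_right in Hc by lra.
      rewrite Heq. apply Rmult_le_compat_r; [lra | apply Hs; lra].
Qed.

(* Since W' >= 0, the CFL condition  r sup W' <= 1  (r > 0) makes  sup W' = ||W'||_oo
   finite, with  r ||W'||_oo <= 1. *)
Lemma cfl_slope_bound (r : R) :
  0 < r -> Rbar_le (Rbar_mult r (supWp V)) 1 ->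
  r * normWp V <= 1 /\ 0 <= normWp V /\ (forall c, 1 <= c -> Derive (Wf V) c <= normWp V).
Proof.
  intros Hr Hcfl.
  assert (Hnn : forall c, 1 <= c -> 0 <= Derive (Wf V) c).
  { intros c Hc. apply derive_nonneg_of_nondecreasing; [lra | apply W_derivable; lra |].
    apply W_nondecreasing. }
  assert (Hub : is_ub_Rbar (fun x => exists w, 1 <= w /\ x = Derive (Wf V) w) (supWp V))
    by apply Lub_Rbar_correct.
  assert (Hnorm : normWp V = real (supWp V)).
  { unfold normWp, supWp. f_equal. apply Lub_Rbar_eqset. intros x; split;
      intros [w [Hw ->]]; exists w; split; auto; rewrite Rabs_pos_eq; auto. }
  assert (Hslope1 := Hub _ (ex_intro _ 1 (conj (Rle_refl 1) eq_refl))).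
  rewrite Hnorm. revert Hcfl Hub Hslope1. destruct (supWp V) as [s | |]; simpl.
  - intros Hcfl Hub Hslope1. pose proof (Hnn 1 (Rle_refl 1)).
    repeat split; [exact Hcfl | lra |].
    intros c Hc. exact (Hub _ (ex_intro _ c (conj Hc eq_refl))).
  - intros Hcfl. exfalso. unfold Rbar_mult, Rbar_mult' in Hcfl.
    destruct (Rle_dec 0 r) as [H | H]; [| lra].
    destruct (Rle_lt_or_eq_dec 0 r H); [exact Hcfl | lra].
  - intros _ _ [].
Qed.

End Flux.

Lemma supZ_le (u : Z -> R) (b : R) : (forall i, Rabs (u i) <= b) -> Rbar_le (supZ u) b.
Proof. intros H. apply Lub_Rbar_correct. intros x [i ->]. apply H. Qed.

Lemma supZ_finite (u : Z -> R) (B : R) :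
  (forall i, Rabs (u i) <= B) -> exists d, supZ u = Finite d /\ forall i, Rabs (u i) <= d.
Proof.
  intros H.
  assert (Hub : is_ub_Rbar (fun x => exists i : Z, x = Rabs (u i)) (supZ u))
    by apply Lub_Rbar_correct.
  assert (Hle := supZ_le u B H).
  revert Hub Hle. destruct (supZ u) as [d | |]; simpl; intros Hub Hle.
  - exists d. split; auto. intros i. exact (Hub _ (ex_intro _ i eq_refl)).
  - contradiction.
  - exfalso. exact (Hub _ (ex_intro _ 0%Z eq_refl)).
Qed.

Lemma pow_one_plus_le_exp (a b : R) (n : nat) :
  0 <= a -> a <= b -> (1 + a) ^ n <= exp (INR n * b).
Proof.
  intros Ha Hab.
  assert (Hexp : forall m, exp b ^ m = exp (INR m * b)).
  { induction m as [| m IHm].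
    - simpl. now rewrite Rmult_0_l, exp_0.
    - rewrite S_INR. simpl. rewrite IHm, <- exp_plus. f_equal. ring. }
  rewrite <- Hexp. apply pow_incr. pose proof (exp_ineq1_le b). lra.
Qed.

Lemma growth_factor_le_exp (dz dt alpha g0 s P : R) (n : nat) :
  0 < dz -> 0 < dt -> 0 < alpha -> 0 <= g0 -> 0 <= s -> g0 <= dz / alpha * P ->
  (1 + dt / dz * g0 * s) ^ n <= exp (s * P / alpha * (INR n * dt)).
Proof.
  intros Hdz Hdt Ha Hg0 Hs Hg0P.
  assert (Hlam : 0 < dt / dz) by (apply Rdiv_lt_0_compat; auto).
  replace (s * P / alpha * (INR n * dt)) with (INR n * (dt / dz * (dz / alpha * P) * s))
    by (field; lra).
  apply pow_one_plus_le_exp.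
  - apply Rmult_le_pos; [apply Rmult_le_pos |]; lra.
  - apply Rmult_le_compat_r; auto. apply Rmult_le_compat_l; lra.
Qed.

Lemma scheme_as_iteration (Phi V : R -> R) (dz dt alpha : R) (y0 : Z -> R) :
  is_RInt_gen Phi (at_point 0) (Rbar_locally p_infty) 1 -> 0 < dz -> 0 < alpha ->
  (forall i, scheme Phi V dz dt alpha y0 O i = fwd_sum (kernel_weight Phi (dz / alpha)) y0 i) /\
  (forall m i, scheme Phi V dz dt alpha y0 (S m) i
               = step (kernel_weight Phi (dz / alpha)) (Wf V) (dt / dz)
                      (scheme Phi V dz dt alpha y0 m) i).
Proof.
  intros Hint Hdz Ha.
  assert (Hnl : forall f i, nlsum Phi dz alpha f i = fwd_sum (kernel_weight Phi (dz / alpha)) f i).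
  { intros f i. apply Series_ext. intros k.
    rewrite (Phi_ij_kernel_weight Phi Hint (dz / alpha)); auto.
    apply Rdiv_lt_0_compat; auto. }
  split; intros; cbn [scheme]; rewrite ?Hnl; reflexivity.
Qed.

Lemma scheme_estimates (Phi V dV : R -> R)
  (Phi_nonneg : forall z, 0 <= z -> 0 <= Phi z)
  (Phi_noninc : forall z1 z2, 0 <= z1 -> z1 <= z2 -> Phi z2 <= Phi z1)
  (Phi_int1 : is_RInt_gen Phi (at_point 0) (Rbar_locally p_infty) 1)
  (V_deriv : forall x, 0 < x -> is_derive V x (dV x))
  (V_noninc : forall x1 x2, 0 <= x1 -> x1 <= x2 -> V x2 <= V x1)
  (dz dt alpha M : R) (y0 : Z -> R) :
  0 < dz -> 0 < dt -> 0 < alpha ->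
  Rbar_le (Rbar_mult (dt / dz) (supWp V)) 1 ->
  (forall i, Rabs (y0 i) <= M) -> (forall i, 1 <= y0 i) ->
  let w := scheme Phi V dz dt alpha y0 in
  let E := fun n => exp (normWp V * Phi 0 / alpha * (INR n * dt)) in
  exists d0, supZ (fun i => w O (i + 1)%Z - w O i) = Finite d0 /\
    forall n,
      (forall i, Rabs (w n (i + 1)%Z - w n i) <= d0 * E n) /\
      (forall i, Rabs (w (S n) i - w n i) <= dt / dz * normWp V * (d0 * E n)).
Proof.
  intros Hdz Hdt Ha Hcfl HM Hy w E.
  assert (Hlam : 0 < dt / dz) by (apply Rdiv_lt_0_compat; auto).
  assert (Hh : 0 < dz / alpha) by (apply Rdiv_lt_0_compat; auto).
  destruct (cfl_slope_bound V V_noninc dV V_deriv _ Hlam Hcfl) as [Hls [Hs0 Hslope]].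
  set (s := normWp V) in *.
  set (g := kernel_weight Phi (dz / alpha)).
  assert (Hg0 := kernel_weight_nonneg Phi Phi_nonneg Phi_int1 _ Hh).
  assert (Hmass := kernel_weight_mass Phi Phi_int1 _ Hh).
  destruct (scheme_as_iteration Phi V dz dt alpha y0 Phi_int1 Hdz Ha) as [Hw0 Hstep].
  fold w g in Hw0, Hstep.
  assert (Hinit : (forall i, 1 <= w O i) /\ (forall i, Rabs (w O (i + 1)%Z - w O i) <= M + M))
    by (setoid_rewrite Hw0; now apply weighted_initial_data).
  destruct Hinit as [Hw0ge Hw0inc].
  destruct (supZ_finite _ _ Hw0inc) as [d0 [Hd0 Hd0b]].
  assert (Hd0p : 0 <= d0) by (eapply Rle_trans; [apply Rabs_pos | apply (Hd0b 0%Z)]).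
  exists d0. split; [exact Hd0 |]. intros n.
  destruct (step_iteration g Hg0 (kernel_weight_noninc Phi Phi_noninc Phi_int1 _ Hh) Hmass
              (Wf V) s _ (dt / dz) (W_slope_bound V V_noninc dV V_deriv s Hslope)
              (W_bounded V V_noninc) (Rlt_le _ _ Hlam) Hs0 Hls w d0 Hstep Hw0ge Hd0b n)
    as [_ [Hspace Htime]].
  assert (HdE : d0 * (1 + dt / dz * g O * s) ^ n <= d0 * E n).
  { apply Rmult_le_compat_l; [exact Hd0p |].
    apply (growth_factor_le_exp dz dt alpha (g O) s (Phi 0) n Hdz Hdt Ha (Hg0 O) Hs0).
    exact (kernel_weight_first Phi Phi_noninc Phi_int1 _ Hh). }
  split; intros i.
  - eapply Rle_trans; [apply Hspace | exact HdE].
  - eapply Rle_trans; [apply Htime |].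
    apply Rmult_le_compat_l; [apply Rmult_le_pos; lra | exact HdE].
Qed.

Theorem lemma2p4 (Phi V : R -> R)
  (Phi_nonneg : forall z, 0 <= z -> 0 <= Phi z)
  (Phi_noninc : forall z1 z2, 0 <= z1 -> z1 <= z2 -> Phi z2 <= Phi z1)
  (Phi_int1 : is_RInt_gen Phi (at_point 0) (Rbar_locally p_infty) 1)
  (Phi_mom : ex_RInt_gen (fun z => z * Phi z) (at_point 0) (Rbar_locally p_infty))
  (V_C1 : exists dV, C1_nonneg V dV)
  (V_noninc : forall x1 x2, 0 <= x1 -> x1 <= x2 -> V x2 <= V x1) :
  exists C : R,
    forall (dz dt alpha : R) (y0 : Z -> R),
      0 < dz -> 0 < dt -> 0 < alpha ->
      Rbar_le 0 (Rbar_mult (dt / dz) (supWp V)) ->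
      Rbar_le (Rbar_mult (dt / dz) (supWp V)) 1 ->
      (exists M, forall i, Rabs (y0 i) <= M) ->
      (forall i, 1 <= y0 i) ->
      let w := scheme Phi V dz dt alpha y0 in
      let Dhat := fun n => supZ (fun i => w n (i + 1)%Z - w n i) in
      forall n : nat,
        Rbar_le (Dhat n) (Rbar_mult (Dhat O) (exp (C / alpha * (INR n * dt)))) /\
        Rbar_le (supZ (fun i => w (S n) i - w n i))
          (Rbar_mult ((dt / dz) * normWp V * exp (C / alpha * (INR n * dt))) (Dhat O)).
Proof.
  destruct V_C1 as [dV [V_deriv _]].
  exists (normWp V * Phi 0).
  intros dz dt alpha y0 Hdz Hdt Ha _ Hcfl [M HM] Hy w Dhat n.
  destruct (scheme_estimates Phi V dV Phi_nonneg Phi_noninc Phi_int1 V_deriv V_noninc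
              dz dt alpha M y0 Hdz Hdt Ha Hcfl HM Hy) as [d0 [Hd0 Hbounds]].
  destruct (Hbounds n) as [Hspace Htime].
  unfold Dhat. fold w in Hd0, Hspace, Htime. rewrite Hd0. simpl.
  split; apply supZ_le; intros i.
  - apply Hspace.
  - eapply Rle_trans; [apply Htime |]. right. ring.
Qed.
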